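(* Let $G$ be a connected graph with at least $5$ vertices and let $H$ be a connected component of the complement $\overline{G}$ such that $H$ is isomorphic to the cycle $C_4$. Then no vertex of $H$ is a basis forced vertex of $G$.
   Context: All graphs are finite and simple. $\overline{G}$ denotes the complement graph. For vertices $u,v$ of a connected graph $G$, $d(u,v)$ is the length of a shortest $u$–$v$ path. A set $R\subseteq V(G)$ is a resolving set if for all distinct $x,y\in V(G)$ there is $r\in R$ with $d(r,x)\neq d(r,y)$. The metric dimension $\dim(G)$ is the minimum cardinality of a resolving set, and a resolving set of cardinality $\dim(G)$ is a metric basis. A vertex is a basis forced vertex if it belongs to every metric basis of $G$. *)

From mathcomp Require Import all_boot.
Set Implicit Arguments. Unset Strict Implicit. Unset Printing Implicit Defensive.

Section Graphs.
Variable T : finType.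
Implicit Types (e : rel T) (x y : T).

Definition simple_graph e := symmetric e /\ irreflexive e.

Definition compl_rel e : rel T := fun x y => (x != y) && ~~ e x y.

Definition connected_graph e := forall x y, connect e x y.

Fixpoint reach e (n : nat) (x y : T) : bool :=
  if n is n'.+1 then (x == y) || [exists z, e x z && reach e n' z y]
  else x == y.

(* d(x,y): length of a shortest x-y path. In a connected graph on #|T|
   vertices it is < #|T|, so the least n < #|T| with reach e n x y. *)
Definition dist e x y : nat := find (fun n => reach e n x y) (iota 0 #|T|).

Definition resolving e (R : {set T}) :=
  forall x y, x != y -> exists2 r, r \in R & dist e r x != dist e r y.

Definition metric_basis e (R : {set T}) :=
  resolving e R /\ forall R' : {set T}, resolving e R' -> #|R| <= #|R'|.

Definition basis_forced e v := forall R, metric_basis e R -> v \in R.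

Definition is_component (f : rel T) (H : {set T}) :=
  exists x, H = [set y | connect f x y].

Definition c4_rel : rel 'I_4 :=
  fun i j => (j == (i.+1 %% 4) :> nat) || (i == (j.+1 %% 4) :> nat).

Definition induced_iso_C4 (f : rel T) (H : {set T}) :=
  exists g : 'I_4 -> T,
    [/\ injective g, (forall v, v \in H <-> exists i, g i = v)
      & forall i j, f (g i) (g j) = c4_rel i j].
End Graphs.

From mathcomp Require Import all_boot perm.
Set Implicit Arguments. Unset Strict Implicit. Unset Printing Implicit Defensive.

(* Write the C4 component of the complement as a-b-c-d-a.  In G the vertices
   a and c are adjacent twins (N[a] = N[c]), as are b and d, since every
   vertex of the component is adjacent in G to everything outside it.  The
   transposition of two twins is an automorphism of G, so it maps a metric
   basis to a metric basis.  A basis R containing a cannot contain c: R meets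
   {b, d}, and a vertex of R in {b, d} separates c from the neighbours of a,
   the only vertices that a does not separate from c, so c could be dropped.
   Hence swapping a and c in a basis containing a yields a basis avoiding a. *)

Section Distances.
Variables (T : finType) (e : rel T).
Hypotheses (e_sym : symmetric e) (e_irr : irreflexive e).

Lemma dist_eq0 x y : (dist e x y == 0) = (x == y).
Proof.
have : 0 < #|T| by apply/card_gt0P; exists x.
by rewrite /dist; case: #|T| => [|n] //= _; case: (x == y).
Qed.

Lemma dist_eq1 x y : (dist e x y == 1) = e x y.
Proof.
have [<-|nxy] := eqVneq x y.
  by have /eqP -> : dist e x x == 0 by rewrite dist_eq0.
have : 1 < #|T| by apply/card_gt1P; exists x, y.
rewrite /dist; case: #|T| => [|[|n]] //= _; rewrite (negbTE nxy) /=.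
have -> : [exists z, e x z && (z == y)] = e x y.
  by apply/existsP/idP => [[z /andP[exz /eqP <-]] // | exy]; exists y; rewrite exy eqxx.
by case: (e x y).
Qed.

Lemma reach_perm (s : {perm T}) n :
  {mono s : u w / e u w} -> {mono s : u w / reach e n u w}.
Proof.
move=> es; elim: n => [|n IHn] u w /=; rewrite (inj_eq perm_inj) //; congr (_ || _).
apply/existsP/existsP => [[z]|[z]]; last by exists (s z); rewrite es IHn.
by exists ((s^-1)%g z); rewrite -es -IHn permKV.
Qed.

Lemma dist_perm (s : {perm T}) :
  {mono s : u w / e u w} -> {mono s : u w / dist e u w}.
Proof. by move=> es u w; apply: eq_find => n; apply: reach_perm. Qed.

Definition twins x1 x2 := forall y, y != x1 -> y != x2 -> e x1 y = e x2 y.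

Lemma tperm_twins x1 x2 : twins x1 x2 -> {mono tperm x1 x2 : u w / e u w}.
Proof.
move=> tw u w.
case: tpermP => [->|->|/eqP ux1 /eqP ux2]; case: tpermP => [->|->|/eqP wx1 /eqP wx2];
  rewrite ?e_irr // 1?e_sym //.
all: by [rewrite tw // e_sym | rewrite -tw // e_sym].
Qed.

Lemma dist_twinsl x1 x2 r :
  twins x1 x2 -> r != x1 -> r != x2 -> dist e x1 r = dist e x2 r.
Proof.
move=> tw rx1 rx2.
by rewrite -(dist_perm (tperm_twins tw)) tpermL tpermD // eq_sym.
Qed.

Lemma dist_twinsr x1 x2 r :
  twins x1 x2 -> r != x1 -> r != x2 -> dist e r x1 = dist e r x2.
Proof.
move=> tw rx1 rx2.
by rewrite -(dist_perm (tperm_twins tw)) tpermL tpermD // eq_sym.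
Qed.

End Distances.

Section MetricBases.
Variables (T : finType) (e : rel T).
Hypotheses (e_sym : symmetric e) (e_irr : irreflexive e).

Definition resolvingb (R : {set T}) :=
  [forall x, forall y, (x != y) ==> [exists r in R, dist e r x != dist e r y]].

Lemma resolvingP R : reflect (resolving e R) (resolvingb R).
Proof.
apply: (iffP forallP) => [HR x y nxy | HR x].
  have /forallP/(_ y) := HR x; rewrite nxy => /existsP[r /andP[rR dxy]].
  by exists r.
apply/forallP => y; apply/implyP => /HR[r rR dxy].
by apply/existsP; exists r; rewrite rR.
Qed.

Lemma exists_metric_basis : exists R, metric_basis e R.
Proof.
have resT : resolvingb setT.
  apply/resolvingP => x y nxy; exists x; rewrite ?inE //.
  have /eqP -> : dist e x x == 0 by rewrite dist_eq0.
  by rewrite eq_sym dist_eq0.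
have [R /resolvingP resR Rmin] := arg_minnP (fun R : {set T} => #|R|) resT.
by exists R; split => // R' /resolvingP; apply: Rmin.
Qed.

Lemma metric_basis_perm (s : {perm T}) R :
  {mono s : u w / e u w} -> metric_basis e R -> metric_basis e (s @: R).
Proof.
move=> es [resR Rmin]; split=> [x y nxy|R' /Rmin].
  have /resR[r rR drxy] : (s^-1)%g x != (s^-1)%g y by rewrite (inj_eq perm_inj).
  exists (s r); first exact: imset_f.
  by rewrite -(permKV s x) -(permKV s y) !(dist_perm es).
by rewrite card_imset //; apply: perm_inj.
Qed.

Lemma resolving_twins x1 x2 R :
  twins e x1 x2 -> x1 != x2 -> resolving e R -> (x1 \in R) || (x2 \in R).
Proof.
move=> tw n12 /(_ x1 x2 n12)[r rR].
have [<-|rx1] := eqVneq r x1; first by rewrite rR.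
have [<-|rx2] := eqVneq r x2; first by rewrite rR orbT.
by rewrite (dist_twinsr e_sym e_irr tw) ?eqxx.
Qed.

(* As a and c are twins, a separates every pair that c separates, except the
   pairs {c, y} with d(a, y) = d(a, c). *)
Lemma resolving_setD1_twin a c R :
  twins e a c -> a != c -> resolving e R -> a \in R ->
  (forall y, y != a -> y != c -> dist e a y = dist e a c ->
     exists2 r, r \in R :\ c & dist e r c != dist e r y) ->
  resolving e (R :\ c).
Proof.
move=> tw nac resR aR sep_c x y nxy.
have aRc : a \in R :\ c by rewrite !inE nac.
have [|/negPn/eqP daxy] := boolP (dist e a x != dist e a y); first by exists a.
have [xa|xa] := eqVneq x a.
  by move: nxy; rewrite xa -(dist_eq0 e) -daxy xa dist_eq0 eqxx.
have [ya|ya] := eqVneq y a.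
  by move: nxy; rewrite ya eq_sym -(dist_eq0 e) daxy ya dist_eq0 eqxx.
have [xc|xc] := eqVneq x c.
  have yc : y != c by rewrite -xc eq_sym.
  by rewrite xc; apply: sep_c; rewrite // -daxy xc.
have [yc|yc] := eqVneq y c.
  have [|r rR drxc] := sep_c x xa xc; first by rewrite daxy yc.
  by exists r; rewrite // yc eq_sym.
have [r rR drxy] := resR x y nxy.
have [rc|rc] := eqVneq r c; last by exists r; rewrite // !inE rc.
by move: drxy; rewrite rc -!(dist_twinsl e_sym e_irr tw) // daxy eqxx.
Qed.

Lemma exists_metric_basis_notin_twin a c :
  twins e a c -> a != c ->
  (forall R, metric_basis e R -> a \in R -> c \notin R) ->
  exists2 R, metric_basis e R & a \notin R.
Proof.
move=> tw nac not_both; have [R basisR] := exists_metric_basis.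
have [aR|] := boolP (a \in R); last by exists R.
exists (tperm a c @: R).
  exact: metric_basis_perm (tperm_twins e_sym e_irr tw) basisR.
by rewrite -{1}(tpermR a c) mem_imset ?not_both //; apply: perm_inj.
Qed.

End MetricBases.

Section ComplementC4.
Variables (T : finType) (e : rel T) (a b c d : T).
Hypotheses (e_sym : symmetric e) (e_irr : irreflexive e).
Hypotheses (e_ac : e a c) (e_bd : e b d).
Hypotheses (ne_ab : ~~ e a b) (ne_bc : ~~ e b c) (ne_cd : ~~ e c d) (ne_da : ~~ e d a).
Hypothesis e_join :
  forall x y, x \in [set a; b; c; d] -> y \notin [set a; b; c; d] -> e x y.

Let a_neq_c : a != c.
Proof. by apply: contraTneq e_ac => ->; rewrite e_irr. Qed.

Lemma twins_ac : twins e a c.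
Proof.
move=> y ya yc; have [yQ|yQ] := boolP (y \in [set a; b; c; d]); last first.
  by rewrite !e_join // !inE eqxx ?orbT.
move: yQ; rewrite !inE (negbTE ya) (negbTE yc) /= ?orbF => /orP[]/eqP->.
  by rewrite (negbTE ne_ab) e_sym (negbTE ne_bc).
by rewrite e_sym (negbTE ne_da) (negbTE ne_cd).
Qed.

Lemma twins_bd : twins e b d.
Proof.
move=> y yb yd; have [yQ|yQ] := boolP (y \in [set a; b; c; d]); last first.
  by rewrite !e_join // !inE eqxx ?orbT.
move: yQ; rewrite !inE (negbTE yb) (negbTE yd) /= ?orbF => /orP[]/eqP->.
  by rewrite e_sym (negbTE ne_ab) (negbTE ne_da).
by rewrite (negbTE ne_bc) e_sym (negbTE ne_cd).
Qed.

Lemma metric_basis_excludes_twin R : metric_basis e R -> a \in R -> c \notin R.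
Proof.
move=> [resR Rmin] aR; apply/negP => cR.
suff /Rmin : resolving e (R :\ c) by rewrite (cardsD1 c R) cR ltnn.
apply: (resolving_setD1_twin e_sym e_irr twins_ac a_neq_c resR aR) => // y ya yc day.
have e_ay : e a y by rewrite -(dist_eq1 e_irr) day (dist_eq1 e_irr).
have yQ : y \notin [set a; b; c; d].
  rewrite !inE !negb_or ya yc andbT; apply/andP; split.
    by apply: contraNneq ne_ab => <-.
  by apply: contraNneq ne_da => <-; rewrite e_sym.
have sep r : r \in R -> r != c -> ~~ e r c -> r \in [set a; b; c; d] ->
    exists2 r', r' \in R :\ c & dist e r' c != dist e r' y.
  move=> rR rc ne_rc rQ; exists r; first by rewrite !inE rR rc.
  apply: contraNneq ne_rc => drcy.
  by rewrite -(dist_eq1 e_irr) drcy (dist_eq1 e_irr) e_join.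
have nbd : b != d by apply: contraTneq e_bd => ->; rewrite e_irr.
have /orP[bR|dR] := resolving_twins e_sym e_irr twins_bd nbd resR.
  apply: (sep b); rewrite ?inE ?eqxx ?orbT //.
  by apply: contraNneq ne_ab => ->.
apply: (sep d); rewrite ?inE ?eqxx ?orbT // 1?e_sym //.
by apply: contraNneq ne_da => ->; rewrite e_sym.
Qed.

Lemma c4_component_basis_notin : exists2 R, metric_basis e R & a \notin R.
Proof.
exact: (exists_metric_basis_notin_twin e_sym e_irr twins_ac a_neq_c
  metric_basis_excludes_twin).
Qed.

End ComplementC4.

Lemma component_compl_join (T : finType) (e : rel T) H x y :
  is_component (compl_rel e) H -> x \in H -> y \notin H -> e x y.
Proof.
move=> [x0 ->]; rewrite !inE => x0x x0y.
have nxy : x != y by apply: contraNneq x0y => <-.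
apply: contraNT x0y => ne_xy; apply: connect_trans x0x (connect1 _).
by rewrite /compl_rel nxy.
Qed.

Lemma c4_ordS (i : 'I_4) :
  let j1 := ordS i in let j2 := ordS j1 in let j3 := ordS j2 in
  [/\ [&& c4_rel i j1, c4_rel j1 j2, c4_rel j2 j3 & c4_rel j3 i],
       [&& ~~ c4_rel i j2, ~~ c4_rel j1 j3, i != j2 & j1 != j3]
     & forall k, k \in [:: i; j1; j2; j3]].
Proof. by case: i => [[|[|[|[|?]]]] ?] //; split=> // -[[|[|[|[|?]]]] ?]. Qed.

Theorem lemma8 (T : finType) (e : rel T) (H : {set T}) :
  simple_graph e -> connected_graph e -> 5 <= #|T| ->
  is_component (compl_rel e) H -> induced_iso_C4 (compl_rel e) H ->
  forall v, v \in H -> ~ basis_forced e v.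
Proof.
move=> [e_sym e_irr] _ _ compH [g [g_inj gH g_rel]] _ /gH[i <-] forced.
have /= [/and4P[r01 r12 r23 r30] /and4P[n02 n13 d02 d13] cover] := c4_ordS i.
have HE : H = [set g i; g (ordS i); g (ordS (ordS i)); g (ordS (ordS (ordS i)))].
  apply/setP => x; apply/idP/idP => [/gH[k <-]|].
    by have := cover k; rewrite !inE => /or4P[]/eqP->; rewrite eqxx ?orbT.
  by rewrite !inE -!orbA => /or4P[]/eqP->; apply/gH; eexists.
have e_g k l : k != l -> ~~ c4_rel k l -> e (g k) (g l).
  move=> kl nkl; move: (g_rel k l).
  by rewrite /compl_rel (inj_eq g_inj) kl (negbTE nkl) => /negbFE.
have ne_g k l : c4_rel k l -> ~~ e (g k) (g l) by rewrite -g_rel => /andP[].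
have [|R basisR] := c4_component_basis_notin e_sym e_irr
  (e_g _ _ d02 n02) (e_g _ _ d13 n13)
  (ne_g _ _ r01) (ne_g _ _ r12) (ne_g _ _ r23) (ne_g _ _ r30).
  by rewrite -HE => x y; apply: component_compl_join.
by rewrite forced.
Qed.
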